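(* In the privacy game, assume $\mathcal{Y}=\mathcal{X}$ and $\varrho\ge 0$. Let $\beta'\in B$ be given by $\beta'_{\hat x y}=1$ if $\hat x=y$ and $\beta'_{\hat x y}=0$ if $\hat x\neq y$, and let $\alpha'\in\arg\min_{\alpha\in A}[\xi(\alpha,\beta')+\varrho\zeta(\alpha)]$. Then $(\alpha',\beta')$ is a Nash equilibrium, i.e. $U(\alpha',\beta')\le U(\alpha,\beta')$ for all $\alpha\in A$ and $V(\alpha',\beta')\le V(\alpha',\beta)$ for all $\beta\in B$.
   Context: Privacy game. $\mathcal{X},\mathcal{W},\mathcal{Y}$ are finite nonempty sets; $p$ is a joint probability mass function of $(X,Z,W)$ on $\mathcal{X}\times\mathcal{X}\times\mathcal{W}$; $d:\mathcal{X}\times\mathcal{X}\to\mathbb{R}_{\ge 0}$; $\varrho$ is the privacy ratio. Sender policies: $A=\{\alpha=(\alpha_{yzw}):\alpha_{yzw}\in[0,1],\ \sum_{y\in\mathcal{Y}}\alpha_{yzw}=1\ \forall (z,w)\in\mathcal{X}\times\mathcal{W}\}$, with $\alpha_{yzw}=\mathbb{P}\{Y=y\mid Z=z,W=w\}$ ($Y$ conditionally independent of $X$ given $(Z,W)$). Receiver policies: $B=\{\beta=(\beta_{\hat x y}):\beta_{\hat x y}\in[0,1],\ \sum_{\hat x\in\mathcal{X}}\beta_{\hat x y}=1\ \forall y\in\mathcal{Y}\}$, with $\beta_{\hat x y}=\mathbb{P}\{\hat X=\hat x\mid Y=y\}$ ($\hat X$ conditionally independent of $(X,Z,W)$ given $Y$).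 Define $\xi(\alpha,\beta)=\mathbb{E}\{d(X,\hat X)\}=\sum_{x,\hat x\in\mathcal{X}}\sum_{y\in\mathcal{Y}}\sum_{z\in\mathcal{X}}\sum_{w\in\mathcal{W}}d(x,\hat x)\beta_{\hat x y}\alpha_{yzw}p(x,z,w)$ and $\zeta(\alpha)=I(Y;W)=\sum_{y,w}P_{yw}\log\frac{P_{yw}}{P_y P_w}$ (with $0\log 0=0$), where $P_{yw}=\sum_{z,x}\alpha_{yzw}p(x,z,w)$, $P_y=\sum_{w}P_{yw}$, $P_w=\sum_{z,x}p(x,z,w)$. Sender cost $U(\alpha,\beta)=\xi(\alpha,\beta)+\varrho\zeta(\alpha)$; receiver cost $V(\alpha,\beta)=\xi(\alpha,\beta)$. *)

From mathcomp Require Import all_boot all_order all_algebra.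
From mathcomp Require Import reals exp.
Set Implicit Arguments. Unset Strict Implicit. Unset Printing Implicit Defensive.
Import Order.TTheory GRing.Theory Num.Theory.
Local Open Scope ring_scope.

Section PrivacyGame.
Variables (R : realType) (X W Y : finType).

(* joint pmf p(x,z,w) of (X,Z,W) on X * X * W *)
Definition is_pmf (p : X -> X -> W -> R) : Prop :=
  (forall x z w, 0 <= p x z w) /\ \sum_x \sum_z \sum_w p x z w = 1.

(* sender policies: alpha y z w = P{Y = y | Z = z, W = w} *)
Definition in_A (alpha : Y -> X -> W -> R) : Prop :=
  (forall y z w, 0 <= alpha y z w <= 1) /\
  (forall z w, \sum_y alpha y z w = 1).

(* receiver policies: beta xh y = P{Xhat = xh | Y = y} *)
Definition in_B (beta : X -> Y -> R) : Prop :=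
  (forall xh y, 0 <= beta xh y <= 1) /\
  (forall y, \sum_xh beta xh y = 1).

Definition xi (p : X -> X -> W -> R) (d : X -> X -> R)
  (alpha : Y -> X -> W -> R) (beta : X -> Y -> R) : R :=
  \sum_x \sum_xh \sum_y \sum_z \sum_w
     d x xh * beta xh y * alpha y z w * p x z w.

Definition P_yw (p : X -> X -> W -> R) (alpha : Y -> X -> W -> R) y w : R :=
  \sum_z \sum_x alpha y z w * p x z w.
Definition P_y (p : X -> X -> W -> R) (alpha : Y -> X -> W -> R) y : R :=
  \sum_w P_yw p alpha y w.
Definition P_w (p : X -> X -> W -> R) w : R :=
  \sum_z \sum_x p x z w.

(* mutual information I(Y;W), with the convention 0 log 0 = 0 *)
Definition zeta (p : X -> X -> W -> R) (alpha : Y -> X -> W -> R) : R :=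
  \sum_y \sum_w
    (if P_yw p alpha y w == 0 then 0
     else P_yw p alpha y w *
            ln (P_yw p alpha y w / (P_y p alpha y * P_w p w))).

Definition U_cost p d (rho : R) alpha beta : R := xi p d alpha beta + rho * zeta p alpha.
Definition V_cost p d alpha beta : R := xi p d alpha beta.

End PrivacyGame.

Definition beta_id (R : realType) (X : finType) : X -> X -> R :=
  fun xh y => if xh == y then 1 else 0.
Arguments beta_id R X : clear implicits.

From mathcomp Require Import all_boot all_order all_algebra.
From mathcomp Require Import reals exp.
From mathcomp Require Import ring lra.
Set Implicit Arguments. Unset Strict Implicit. Unset Printing Implicit Defensive.
Import Order.TTheory GRing.Theory Num.Theory.
Local Open Scope ring_scope.

(* With the identity receiver, the sender's distortion is the sum over messages
   y of the cost [guess_cost y y] of guessing y after seeing y.  If for some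
   message y0 another guess x1 were strictly cheaper, the sender could relabel
   message y0 as x1: the guess x1 is then made in the situations where y0 was
   sent, which strictly lowers the distortion, while the mutual information
   I(Y;W) does not grow, by the log-sum inequality for the two merged terms.
   This contradicts the optimality of alpha', so guessing the message itself
   is a best response of the receiver. *)

Lemma ln_sub_ge {R : realType} {u v : R} : 0 < u -> 0 < v ->
  1 - v / u <= ln u - ln v.
Proof.
move=> u_gt0 v_gt0; have vu_gt0 : 0 < v / u by rewrite divr_gt0.
have : ln (1 + (v / u - 1)) <= v / u - 1 by apply: le_ln1Dx; lra.
by rewrite addrC subrK ln_div ?posrE //; lra.
Qed.

Section InfoTerm.
Variable R : realType.

(* The summand of I(Y;W) in [zeta]: [a] stands for P_yw, [A] for P_y, [Q] for P_w. *)
Definition info_term (a A Q : R) : R :=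
  if a == 0 then 0 else a * ln (a / (A * Q)).

Lemma info_term_le_denom (a A B Q : R) : 0 <= a -> a <= A -> a <= Q -> A <= B ->
  info_term a B Q <= info_term a A Q.
Proof.
rewrite /info_term; have [->|a_neq0] := eqVneq a 0; first by rewrite lexx.
move=> a_ge0 aA aQ AB; have a_gt0 : 0 < a by rewrite lt_def a_neq0.
have A_gt0 : 0 < A by lra. have Q_gt0 : 0 < Q by lra.
rewrite ler_pM2l // ler_ln ?posrE ?divr_gt0 ?mulr_gt0 //; last lra.
by rewrite ler_pM2l // lef_pV2 ?posrE ?mulr_gt0 // ?ler_pM2r //; lra.
Qed.

Lemma log_sum_le (a a' A A' Q : R) : 0 <= a -> 0 <= a' -> a <= A -> a' <= A' ->
  a <= Q -> a' <= Q ->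
  info_term (a + a') (A + A') Q <= info_term a A Q + info_term a' A' Q.
Proof.
move=> a_ge0 a'_ge0 aA a'A' aQ a'Q.
have [->|a_neq0] := eqVneq a 0.
  by rewrite add0r [info_term 0 _ _]/info_term eqxx add0r info_term_le_denom //; lra.
have [->|a'_neq0] := eqVneq a' 0.
  by rewrite addr0 [info_term 0 _ _]/info_term eqxx addr0 info_term_le_denom //; lra.
have a_gt0 : 0 < a by rewrite lt_def a_neq0.
have a'_gt0 : 0 < a' by rewrite lt_def a'_neq0.
have A_gt0 : 0 < A by lra. have A'_gt0 : 0 < A' by lra. have Q_gt0 : 0 < Q by lra.
rewrite /info_term (negbTE a_neq0) (negbTE a'_neq0) gt_eqF; last lra.
set v := (a + a') / ((A + A') * Q).
set u := a / (A * Q); set u' := a' / (A' * Q).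
have v_gt0 : 0 < v by rewrite divr_gt0 ?mulr_gt0 //; lra.
have u_gt0 : 0 < u by rewrite divr_gt0 ?mulr_gt0.
have u'_gt0 : 0 < u' by rewrite divr_gt0 ?mulr_gt0.
(* weighted by a and a', the linear lower bounds of [ln_sub_ge] sum to 0 *)
have first_order_cancel : a * (1 - v / u) + a' * (1 - v / u') = 0.
  rewrite /u /u' /v; field; apply/and5P; split; rewrite ?gt_eqF //; lra.
have := ler_wpM2l (ltW a_gt0) (ln_sub_ge u_gt0 v_gt0).
have := ler_wpM2l (ltW a'_gt0) (ln_sub_ge u'_gt0 v_gt0).
lra.
Qed.

End InfoTerm.

Section MergeOnto.
Variables (R : pzRingType) (T : finType).
Implicit Types (f : T -> R) (y : T).

Lemma bigD2 (F : T -> R) {x1 y0} : x1 != y0 ->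
  \sum_y F y = F x1 + F y0 + \sum_(y | (y != x1) && (y != y0)) F y.
Proof.
move=> x1_neq_y0; rewrite (bigD1 x1) //= (bigD1 y0) /=; last by rewrite eq_sym.
by rewrite addrA; congr (_ + _); apply: eq_bigl => y; rewrite andbC.
Qed.

Definition merge_onto f x1 y0 y : R :=
  if y == x1 then f x1 + f y0 else if y == y0 then 0 else f y.

Lemma merge_onto_x1 f x1 y0 : merge_onto f x1 y0 x1 = f x1 + f y0.
Proof. by rewrite /merge_onto eqxx. Qed.

Lemma merge_onto_y0 f x1 y0 : x1 != y0 -> merge_onto f x1 y0 y0 = 0.
Proof.
by move=> x1_neq_y0; rewrite /merge_onto eq_sym (negbTE x1_neq_y0) eqxx.
Qed.

Lemma merge_onto_other f x1 y0 y :
  (y != x1) && (y != y0) -> merge_onto f x1 y0 y = f y.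
Proof.
by case/andP=> /negbTE y_neq_x1 /negbTE y_neq_y0; rewrite /merge_onto y_neq_x1 y_neq_y0.
Qed.

Lemma sum_merge_onto f x1 y0 : x1 != y0 -> \sum_y merge_onto f x1 y0 y = \sum_y f y.
Proof.
move=> x1_neq_y0; rewrite !(bigD2 _ x1_neq_y0) merge_onto_x1 merge_onto_y0 // addr0.
by congr (_ + _); apply: eq_bigr => y; apply: merge_onto_other.
Qed.

Lemma merge_onto_sum (I : finType) (G : T -> I -> R) x1 y0 y :
  merge_onto (fun y => \sum_i G y i) x1 y0 y = \sum_i merge_onto (G^~ i) x1 y0 y.
Proof.
rewrite /merge_onto; case: ifP => _; first by rewrite big_split.
by case: ifP => _ //; rewrite big1.
Qed.

Lemma merge_onto_mulr f c x1 y0 y :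
  merge_onto f x1 y0 y * c = merge_onto (fun y => f y * c) x1 y0 y.
Proof.
rewrite /merge_onto; case: ifP => _; first by rewrite mulrDl.
by case: ifP => _ //; rewrite mul0r.
Qed.

Lemma merge_onto_mull f c x1 y0 y :
  c * merge_onto f x1 y0 y = merge_onto (fun y => c * f y) x1 y0 y.
Proof.
rewrite /merge_onto; case: ifP => _; first by rewrite mulrDr.
by case: ifP => _ //; rewrite mulr0.
Qed.

End MergeOnto.

Section PrivacyGame.
Variables (R : realType) (X W : finType) (p : X -> X -> W -> R) (d : X -> X -> R).
Hypothesis p_ge0 : forall x z w, 0 <= p x z w.
Implicit Types (alpha : X -> X -> W -> R) (beta : X -> X -> R).

Definition guess_cost alpha (xh y : X) : R :=
  \sum_x \sum_z \sum_w d x xh * alpha y z w * p x z w.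

Lemma xiE alpha beta :
  xi p d alpha beta = \sum_y \sum_xh beta xh y * guess_cost alpha xh y.
Proof.
rewrite /xi /guess_cost; under eq_bigr do rewrite exchange_big /=.
rewrite exchange_big /=; apply: eq_bigr => y _.
rewrite exchange_big /=; apply: eq_bigr => xh _.
rewrite mulr_sumr; apply: eq_bigr => x _.
rewrite mulr_sumr; apply: eq_bigr => z _.
rewrite mulr_sumr; apply: eq_bigr => w _.
by rewrite !mulrA [beta xh y * _]mulrC.
Qed.

Lemma zetaE alpha :
  zeta p alpha = \sum_y \sum_w info_term (P_yw p alpha y w) (P_y p alpha y) (P_w p w).
Proof. by []. Qed.

Lemma xi_beta_id alpha : xi p d alpha (beta_id R X) = \sum_y guess_cost alpha y y.
Proof.
rewrite xiE; apply: eq_bigr => y _.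
rewrite (bigD1 y) //= /beta_id eqxx mul1r big1 ?addr0 // => xh /negbTE ->.
by rewrite mul0r.
Qed.

Lemma xi_beta_id_le alpha beta :
  (forall xh y, guess_cost alpha y y <= guess_cost alpha xh y) ->
  in_B beta -> xi p d alpha (beta_id R X) <= xi p d alpha beta.
Proof.
move=> diag_min [beta01 beta_sum1]; rewrite xi_beta_id xiE; apply: ler_sum => y _.
rewrite -[guess_cost _ y y]mul1r -(beta_sum1 y) mulr_suml; apply: ler_sum => xh _.
by apply: ler_wpM2l; [case/andP: (beta01 xh y) | apply: diag_min].
Qed.

Section InA.
Variable alpha : X -> X -> W -> R.
Hypothesis alphaA : in_A alpha.

Lemma P_yw_ge0 y w : 0 <= P_yw p alpha y w.
Proof.
apply: sumr_ge0 => z _; apply: sumr_ge0 => x _.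
by rewrite mulr_ge0 //; case/andP: (alphaA.1 y z w).
Qed.

Lemma P_yw_le_P_y y w : P_yw p alpha y w <= P_y p alpha y.
Proof. by rewrite /P_y (bigD1 w) //= lerDl sumr_ge0 // => w' _; apply: P_yw_ge0. Qed.

Lemma P_yw_le_P_w y w : P_yw p alpha y w <= P_w p w.
Proof.
apply: ler_sum => z _; apply: ler_sum => x _.
by rewrite ler_piMl //; case/andP: (alphaA.1 y z w).
Qed.

End InA.

Variables (x1 y0 : X).
Hypothesis x1_neq_y0 : x1 != y0.

Definition merge_policy alpha : X -> X -> W -> R :=
  fun y z w => merge_onto (fun y => alpha y z w) x1 y0 y.

Lemma merge_policy_in_A alpha : in_A alpha -> in_A (merge_policy alpha).
Proof.
move=> [alpha01 alpha_sum1]; split=> [y z w|z w]; last first.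
  by rewrite sum_merge_onto.
have alpha_ge0 y' : 0 <= alpha y' z w by case/andP: (alpha01 y' z w).
rewrite /merge_policy /merge_onto; case: ifP => _.
  rewrite addr_ge0 //= -(alpha_sum1 z w) (bigD2 _ x1_neq_y0) lerDl.
  by apply: sumr_ge0.
by case: ifP => _ //; rewrite lexx ler01.
Qed.

Lemma P_yw_merge_policy alpha y w :
  P_yw p (merge_policy alpha) y w = merge_onto (fun y => P_yw p alpha y w) x1 y0 y.
Proof.
rewrite /P_yw merge_onto_sum; apply: eq_bigr => z _.
by rewrite merge_onto_sum; apply: eq_bigr => x _; rewrite merge_onto_mulr.
Qed.

Lemma P_y_merge_policy alpha y :
  P_y p (merge_policy alpha) y = merge_onto (P_y p alpha) x1 y0 y.
Proof.
by rewrite /P_y merge_onto_sum; apply: eq_bigr => w _; apply: P_yw_merge_policy.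
Qed.

Lemma guess_cost_merge_policy alpha xh y :
  guess_cost (merge_policy alpha) xh y = merge_onto (guess_cost alpha xh) x1 y0 y.
Proof.
rewrite /guess_cost merge_onto_sum; apply: eq_bigr => x _.
rewrite merge_onto_sum; apply: eq_bigr => z _.
rewrite merge_onto_sum; apply: eq_bigr => w _.
by rewrite /merge_policy merge_onto_mull merge_onto_mulr.
Qed.

Lemma xi_merge_policy alpha :
  xi p d (merge_policy alpha) (beta_id R X) =
  xi p d alpha (beta_id R X) - guess_cost alpha y0 y0 + guess_cost alpha x1 y0.
Proof.
rewrite !xi_beta_id !(bigD2 _ x1_neq_y0) !guess_cost_merge_policy.
rewrite merge_onto_x1 merge_onto_y0 //.
under eq_bigr => y /merge_onto_other y_other do
  rewrite guess_cost_merge_policy y_other.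
by rewrite addr0; ring.
Qed.

Lemma zeta_merge_policy_le alpha : in_A alpha ->
  zeta p (merge_policy alpha) <= zeta p alpha.
Proof.
move=> alphaA; rewrite !zetaE !(bigD2 _ x1_neq_y0).
have row_other y : (y != x1) && (y != y0) ->
    \sum_w info_term (P_yw p (merge_policy alpha) y w)
      (P_y p (merge_policy alpha) y) (P_w p w)
  = \sum_w info_term (P_yw p alpha y w) (P_y p alpha y) (P_w p w).
  move=> y_other; apply: eq_bigr => w _.
  by rewrite P_yw_merge_policy P_y_merge_policy !merge_onto_other.
have row_y0 : \sum_w info_term (P_yw p (merge_policy alpha) y0 w)
    (P_y p (merge_policy alpha) y0) (P_w p w) = 0.
  by apply: big1 => w _; rewrite P_yw_merge_policy merge_onto_y0 // /info_term eqxx.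
rewrite (eq_bigr _ row_other) row_y0 addr0 lerD2r -big_split /=; apply: ler_sum => w _.
rewrite P_yw_merge_policy P_y_merge_policy !merge_onto_x1.
by apply: log_sum_le; rewrite ?P_yw_ge0 ?P_yw_le_P_y ?P_yw_le_P_w.
Qed.

End PrivacyGame.

Lemma optimal_sender_guess_cost_diag_min (R : realType) (X W : finType)
    (p : X -> X -> W -> R) (d : X -> X -> R) (rho : R) (alpha' : X -> X -> W -> R) :
  (forall x z w, 0 <= p x z w) -> 0 <= rho -> in_A alpha' ->
  (forall alpha, in_A alpha ->
     xi p d alpha' (beta_id R X) + rho * zeta p alpha'
       <= xi p d alpha (beta_id R X) + rho * zeta p alpha) ->
  forall xh y, guess_cost p d alpha' y y <= guess_cost p d alpha' xh y.
Proof.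
move=> p_ge0 rho_ge0 alpha'A opt xh y; rewrite leNgt; apply/negP => cheaper.
have xh_neq_y : xh != y by apply: contraTneq cheaper => ->; rewrite ltxx.
have := opt _ (merge_policy_in_A xh_neq_y alpha'A).
have := ler_wpM2l rho_ge0 (zeta_merge_policy_le p_ge0 xh_neq_y alpha'A).
rewrite xi_merge_policy //; lra.
Qed.

Theorem mainTheorem4 (R : realType) (X W : finType)
  (p : X -> X -> W -> R) (d : X -> X -> R) (rho : R)
  (alpha' : X -> X -> W -> R) :
  is_pmf p ->
  (forall x xh, 0 <= d x xh) ->
  0 <= rho ->
  in_A alpha' ->
  (forall alpha : X -> X -> W -> R, in_A alpha ->
     xi p d alpha' (beta_id R X) + rho * zeta p alpha'
       <= xi p d alpha (beta_id R X) + rho * zeta p alpha) ->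
  (forall alpha : X -> X -> W -> R, in_A alpha ->
     U_cost p d rho alpha' (beta_id R X) <= U_cost p d rho alpha (beta_id R X)) /\
  (forall beta : X -> X -> R, in_B beta ->
     V_cost p d alpha' (beta_id R X) <= V_cost p d alpha' beta).
Proof.
move=> [p_ge0 _] _ rho_ge0 alpha'A opt; split; first by move=> alpha /opt.
move=> beta betaB; apply: xi_beta_id_le betaB.
exact: optimal_sender_guess_cost_diag_min p_ge0 rho_ge0 alpha'A opt.
Qed.
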